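(* Let $T$, $\mathcal{S}=\mathcal{S}_+\cup\mathcal{S}_-$, $\Psi$, $U$, $\lambda,\mu$, $P_\lambda,P_\mu$ and $W$ be as in the context. Consider the discrete-time QBD with phase space $\mathcal{S}$ and transition blocks $$C_{-1}=\begin{bmatrix}0&(I-\mu^{-1}T_{++})^{-1}P_{\mu+-}\\0&W\end{bmatrix},\quad C_0=\begin{bmatrix}0&(I-\mu^{-1}T_{++})^{-1}P_{\lambda+-}\\0&0\end{bmatrix},\quad C_1=\begin{bmatrix}(I-\mu^{-1}T_{++})^{-1}P_{\lambda++}&0\\0&0\end{bmatrix}.$$ Then its $\mathcal{G}$-matrix is $$\mathcal{G}_C=\begin{bmatrix}0&\Psi\\0&W\end{bmatrix}.$$
   Context: $T$ is the generator of a continuous-time Markov chain on a finite set $\mathcal{S}=\mathcal{S}_+\cup\mathcal{S}_-$ (disjoint, both nonempty), partitioned into blocks $T_{++},T_{+-},T_{-+},T_{--}$ according to $\mathcal{S}_\pm$. $\Psi$ is the minimal nonnegative solution of $T_{+-}+\Psi T_{--}+T_{++}\Psi+\Psi T_{-+}\Psi=0$ (the first-return probability matrix of the unit-rate fluid queue with phase generator $T$, rates $+1$ on $\mathcal{S}_+$ and $-1$ on $\mathcal{S}_-$), and $U:=T_{--}+T_{-+}\Psi$. $\lambda,\mu>0$ satisfy $\lambda,\mu\ge\max_i|T_{ii}|$; $P_\lambda:=I+\lambda^{-1}T$, $P_\mu:=I+\mu^{-1}T$ with blocks $P_{\lambda++}$ etc.; $W:=(I+\mu^{-1}U)(I-\lambda^{-1}U)^{-1}$.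 A discrete-time quasi-birth-death process (QBD) with transition blocks $L_{-1},L_0,L_1$ is a Markov chain $\{(Y_n,\kappa_n)\}$ on $\mathbb{Z}\times\mathcal{S}$ with $\mathbb{P}[Y_n=k+d,\kappa_n=j\mid Y_{n-1}=k,\kappa_{n-1}=i]=(L_d)_{ij}$ for $d\in\{-1,0,1\}$. Its $\mathcal{G}$-matrix has entries $\mathcal{G}_{ij}=\mathbb{P}[\theta<\infty,\kappa_\theta=j\mid Y_0=k,\kappa_0=i]$ with $\theta=\inf\{n>0:Y_n=k-1\}$. Matrices are partitioned into blocks according to $\mathcal{S}_+,\mathcal{S}_-$. *)

From HB Require Import structures.
From mathcomp Require Import all_boot all_order all_algebra.
From mathcomp Require Import all_classical all_reals topology normedtype sequences.
Set Implicit Arguments. Unset Strict Implicit. Unset Printing Implicit Defensive.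
Import Order.TTheory GRing.Theory Num.Theory.
Local Open Scope ring_scope.
Import numFieldNormedType.Exports.
Local Open Scope classical_set_scope.

Section Defs.
Variable R : realType.

(* Phase space S = S_+ (first p indices) ∪ S_- (last m indices) = 'I_(p+m);
   blocks: ulsubmx = ++, ursubmx = +-, dlsubmx = -+, drsubmx = --. *)

Definition is_generator n (T : 'M[R]_n) : Prop :=
  (forall i j, i != j -> 0 <= T i j) /\ (forall i, \sum_j T i j = 0).

Definition nonnegmx m n (A : 'M[R]_(m, n)) : Prop := forall i j, 0 <= A i j.
Definition lemx m n (A B : 'M[R]_(m, n)) : Prop := forall i j, A i j <= B i j.

Definition riccati p m (T : 'M[R]_(p + m)) (X : 'M[R]_(p, m)) : Prop :=
  ursubmx T + X *m drsubmx T + ulsubmx T *m X + X *m dlsubmx T *m X = 0.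

Definition minimal_nonneg_sol p m (T : 'M[R]_(p + m)) (Psi : 'M[R]_(p, m)) : Prop :=
  [/\ nonnegmx Psi, riccati T Psi &
      forall X, nonnegmx X -> riccati T X -> lemx Psi X].

Section QBD.
Variables (k : nat) (Am1 A0 A1 : 'M[R]_k).

(* taboo n l : (i,j) entry = P[Y_n = Y_0 + l, kappa_n = j, Y_t >= Y_0 for 0<=t<=n
   | kappa_0 = i], i.e. the sum over all admissible paths of products of the
   transition probabilities (L_d)_{ij}. *)
Fixpoint taboo (n : nat) : nat -> 'M[R]_k :=
  match n with
  | 0 => fun l => if l == 0%N then 1%:M else 0
  | n'.+1 => fun l =>
      (if l is l'.+1 then taboo n' l' *m A1 else 0)
      + taboo n' l *m A0 + taboo n' l.+1 *m Am1
  end.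

(* (i,j) entry = P[theta = n+1, kappa_theta = j | Y_0 = level, kappa_0 = i] *)
Definition first_passage (n : nat) : 'M[R]_k := taboo n 0 *m Am1.

(* G_ij = P[theta < oo, kappa_theta = j | kappa_0 = i]
        = sum_{n >= 0} P[theta = n+1, kappa_theta = j | kappa_0 = i] *)
Definition is_Gmatrix (G : 'M[R]_k) : Prop :=
  forall i j, (fun N : nat => \sum_(n < N) (first_passage n i j : R)) @ \oo --> (G i j : R).

End QBD.
End Defs.

From HB Require Import structures.
From mathcomp Require Import all_boot all_order all_algebra.
From mathcomp Require Import all_classical all_reals topology normedtype sequences.
From mathcomp Require Import ring zify.
Set Implicit Arguments. Unset Strict Implicit. Unset Printing Implicit Defensive.
Import Order.TTheory GRing.Theory Num.Theory.
Import numFieldNormedType.Exports.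
Local Open Scope ring_scope.

(* From a phase in S_+ the QBD can only climb one level per step through
   X = K P_lam++ (with K = (I - mu^-1 T_++)^-1), leave S_+ through
   Ap = K P_lam+- (same level) or Bp = K P_mu+- (one level down), and then
   descend one level per step through W.  Hence the G-matrix has blocks
   G_-+ = 0, G_-- = W and G_+- = sum_j X^j (Ap W + Bp) W^j, the limit G of the
   iterates of Z |-> X Z W + Ap W + Bp from 0.
   Multiplying by the M-matrices I - mu^-1 T_++ and I - lam^-1 U shows that
   the fixed points of this map are exactly the solutions of the Sylvester
   equation T_+- + T_++ Z + Z U = 0, one of which is Psi; hence G <= Psi.
   Conversely the Riccati residual of G is -G T_-+ (Psi - G) <= 0, and Psi,
   the limit of the monotone Riccati iteration started at 0, lies below every
   nonnegative supersolution; hence Psi <= G.  The same iteration gives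
   Psi 1 <= 1, which makes U a subgenerator and I - lam^-1 U an M-matrix. *)

Section NonnegMatrices.
Variable R : realType.
Implicit Types (a b c : nat).

Lemma lemx_refl a b (A : 'M[R]_(a, b)) : lemx A A.
Proof. by []. Qed.

Lemma lemx_trans a b (A B C : 'M[R]_(a, b)) : lemx A B -> lemx B C -> lemx A C.
Proof. by move=> hAB hBC i j; exact: le_trans (hAB i j) (hBC i j). Qed.

Lemma lemx_anti a b (A B : 'M[R]_(a, b)) : lemx A B -> lemx B A -> A = B.
Proof. by move=> hAB hBA; apply/matrixP => i j; apply/eqP; rewrite eq_le hAB hBA. Qed.

Lemma lemx0 a b (A : 'M[R]_(a, b)) : lemx 0 A <-> nonnegmx A.
Proof. by split=> hA i j; have := hA i j; rewrite mxE. Qed.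

Lemma oppmx_le0 a b (A : 'M[R]_(a, b)) : lemx (- A) 0 <-> nonnegmx A.
Proof. by split=> hA i j; have := hA i j; rewrite !mxE oppr_le0. Qed.

Lemma submx_ge0 a b (A B : 'M[R]_(a, b)) : nonnegmx (B - A) <-> lemx A B.
Proof. by split=> hAB i j; have := hAB i j; rewrite !mxE subr_ge0. Qed.

Lemma lemxD a b (A B C D : 'M[R]_(a, b)) :
  lemx A B -> lemx C D -> lemx (A + C) (B + D).
Proof. by move=> hAB hCD i j; rewrite !mxE lerD. Qed.

Lemma lemxZ a b (k : R) (A B : 'M[R]_(a, b)) :
  0 <= k -> lemx A B -> lemx (k *: A) (k *: B).
Proof. by move=> k0 hAB i j; rewrite !mxE ler_wpM2l. Qed.

Lemma lemx_mul2l a b c (A : 'M[R]_(a, b)) (B C : 'M[R]_(b, c)) :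
  nonnegmx A -> lemx B C -> lemx (A *m B) (A *m C).
Proof. by move=> hA hBC i j; rewrite !mxE; apply: ler_sum => k _; rewrite ler_wpM2l. Qed.

Lemma lemx_mul2r a b c (A : 'M[R]_(b, c)) (B C : 'M[R]_(a, b)) :
  nonnegmx A -> lemx B C -> lemx (B *m A) (C *m A).
Proof. by move=> hA hBC i j; rewrite !mxE; apply: ler_sum => k _; rewrite ler_wpM2r. Qed.

Lemma nonnegmx0 a b : nonnegmx (0 : 'M[R]_(a, b)).
Proof. by move=> i j; rewrite mxE. Qed.

Lemma nonnegmx1 a : nonnegmx (1 : 'M[R]_a).
Proof. by move=> i j; rewrite !mxE ler0n. Qed.

Lemma nonnegmxD a b (A B : 'M[R]_(a, b)) :
  nonnegmx A -> nonnegmx B -> nonnegmx (A + B).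
Proof. by move=> hA hB i j; rewrite mxE addr_ge0. Qed.

Lemma nonnegmxZ a b (k : R) (A : 'M[R]_(a, b)) :
  0 <= k -> nonnegmx A -> nonnegmx (k *: A).
Proof. by move=> k0 hA i j; rewrite mxE mulr_ge0. Qed.

Lemma nonnegmxM a b c (A : 'M[R]_(a, b)) (B : 'M[R]_(b, c)) :
  nonnegmx A -> nonnegmx B -> nonnegmx (A *m B).
Proof. by move=> hA hB i j; rewrite mxE sumr_ge0 // => k _; rewrite mulr_ge0. Qed.

Lemma nonnegmxX a (A : 'M[R]_a) k : nonnegmx A -> nonnegmx (A ^+ k).
Proof.
move=> hA; elim: k => [|k IHk]; first exact: nonnegmx1.
by rewrite exprS; exact: nonnegmxM.
Qed.

Lemma nonnegmx_block a b c d (A : 'M[R]_(a, c)) (B : 'M[R]_(a, d))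
    (C : 'M[R]_(b, c)) (D : 'M[R]_(b, d)) :
  nonnegmx A -> nonnegmx B -> nonnegmx C -> nonnegmx D ->
  nonnegmx (block_mx A B C D).
Proof.
move=> hA hB hC hD i j.
case: (split_ordP i) => {}i ->; case: (split_ordP j) => {}j ->;
  by rewrite ?block_mxEul ?block_mxEur ?block_mxEdl ?block_mxEdr.
Qed.

Lemma nonnegmx_submx a b c d (A : 'M[R]_(a + b, c + d)) :
  nonnegmx A ->
  [/\ nonnegmx (ulsubmx A), nonnegmx (ursubmx A), nonnegmx (dlsubmx A)
    & nonnegmx (drsubmx A)].
Proof. by move=> hA; split=> i j; rewrite !mxE. Qed.

End NonnegMatrices.

Section ZMatrix.
Variables (R : realType) (n : nat) (M : 'M[R]_n).
Hypothesis M_offdiag_le0 : forall i j, i != j -> M i j <= 0.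
Hypothesis M_rowsum_gt0 : forall i, 0 < \sum_j M i j.

(* At a row index minimising a column of Y, a negative minimum would make the
   corresponding entry of M *m Y negative. *)
Lemma Zmatrix_mulmx_ge0 c (Y : 'M[R]_(n, c)) : nonnegmx (M *m Y) -> nonnegmx Y.
Proof.
move=> hMY i j.
have [i0 _ Ymin] := @arg_minP _ _ 'I_n i xpredT (fun k => Y k j) isT.
apply: le_trans (Ymin i isT); rewrite leNgt; apply/negP => Yi0_lt0.
have : \sum_k M i0 k * Y k j <= \sum_k M i0 k * Y i0 j.
  apply: ler_sum => k _; have [<-//|ne] := eqVneq i0 k.
  by rewrite ler_wnM2l ?M_offdiag_le0 ?Ymin.
rewrite -mulr_suml; move: (hMY i0 j); rewrite mxE => /le_trans/[apply].
by rewrite leNgt pmulr_rlt0 ?M_rowsum_gt0 ?Yi0_lt0.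
Qed.

Lemma Zmatrix_unit : M \in unitmx.
Proof.
rewrite -unitmx_tr -row_free_unit -kermx_eq0; apply/eqP.
set K := kermx M^T.
have MK0 : M *m K^T = 0 by rewrite -[M]trmxK -trmx_mul mulmx_ker trmx0.
have Kge0 : nonnegmx K^T.
  by apply: Zmatrix_mulmx_ge0; rewrite MK0; exact: nonnegmx0.
have Kle0 : nonnegmx (- K^T).
  by apply: Zmatrix_mulmx_ge0; rewrite mulmxN MK0 oppr0; exact: nonnegmx0.
apply/matrixP => i j; apply/eqP; rewrite mxE eq_le.
by move: (Kge0 j i) (Kle0 j i); rewrite !mxE oppr_ge0 => -> ->.
Qed.

Lemma Zmatrix_inv_ge0 : nonnegmx (invmx M).
Proof.
by apply: Zmatrix_mulmx_ge0; rewrite mulmxV ?Zmatrix_unit // idmxE; exact: nonnegmx1.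
Qed.

End ZMatrix.

Definition subgenerator (R : realType) n (A : 'M[R]_n) : Prop :=
  (forall i j, i != j -> 0 <= A i j) /\ lemx (A *m (const_mx 1 : 'cV_n)) 0.

Section Subgenerator.
Variables (R : realType) (n : nat) (A : 'M[R]_n) (k : R).
Hypotheses (subgenA : subgenerator A) (k_ge0 : 0 <= k).

Let offdiag_le0 i j : i != j -> (1%:M - k *: A) i j <= 0.
Proof.
move=> ij; rewrite !mxE (negPf ij) sub0r oppr_le0 mulr_ge0 //.
by case: subgenA => + _; apply.
Qed.

Let rowsum_gt0 i : 0 < \sum_j (1%:M - k *: A) i j.
Proof.
rewrite (eq_bigr (fun j => (i == j)%:R - k * A i j)); last by move=> j _; rewrite !mxE.
rewrite sumrB -mulr_sumr (bigD1 i) //= eqxx big1 => [|j /negPf]; last first.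
  by rewrite eq_sym => ->.
have : \sum_j A i j <= 0.
  by case: subgenA => _ /(_ i 0); rewrite !mxE; under eq_bigr do rewrite mxE mulr1.
by move=> rowsum_le0; rewrite addr0 subr_gt0 (le_lt_trans _ ltr01) // mulr_ge0_le0.
Qed.

Lemma subgenerator_1subZ_unit : 1%:M - k *: A \in unitmx.
Proof. exact: Zmatrix_unit offdiag_le0 rowsum_gt0. Qed.

Lemma subgenerator_1subZ_inv_ge0 : nonnegmx (invmx (1%:M - k *: A)).
Proof. exact: Zmatrix_inv_ge0 offdiag_le0 rowsum_gt0. Qed.

End Subgenerator.

Lemma uniformized_ge0 (R : realType) n (A : 'M[R]_n) (k : R) :
  0 < k -> (forall i j, i != j -> 0 <= A i j) -> (forall i, - k <= A i i) ->
  nonnegmx (1%:M + k^-1 *: A).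
Proof.
move=> k_gt0 offdiag_ge0 diag_ge i j; rewrite !mxE.
have [<-|ij] := eqVneq i j; last first.
  by rewrite mulr0n add0r mulr_ge0 ?offdiag_ge0 // invr_ge0 ltW.
rewrite -(mulVf (lt0r_neq0 k_gt0)) -mulrDr mulr_ge0 ?invr_ge0 ?(ltW k_gt0) //.
by rewrite -lerBlDl sub0r diag_ge.
Qed.

Section RealSequences.
Variable R : realType.
Local Open Scope classical_set_scope.

Lemma nondecreasing_cvg_subseq (u : R ^nat) (s : nat -> nat) (l : R) :
  nondecreasing_seq u -> (forall n, n <= s n)%N ->
  (fun n => u (s n)) @ \oo --> l -> u @ \oo --> l.
Proof.
move=> u_nd s_ge us_l.
have u_le n : u n <= l.
  apply: (ler_cvg_to (cvg_cst (u n)) us_l).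
  by near=> k; apply: u_nd; apply: leq_trans (s_ge k); near: k; exact: nbhs_infty_ge.
apply/cvgrPdist_le => e e_gt0.
have [N _ usN] := (cvgrPdist_le _ _).1 us_l e e_gt0.
exists (s N) => // n /= sN_le_n.
rewrite ger0_norm ?subr_ge0 //; apply: le_trans (usN N (leqnn N)).
by rewrite ger0_norm ?subr_ge0 // lerB // u_nd.
Unshelve. all: by end_near. Qed.

End RealSequences.

Section EntrywiseConvergence.
Variable R : realType.
Local Open Scope classical_set_scope.
Implicit Types (a b c : nat).

Definition cvg_mx a b (Z : nat -> 'M[R]_(a, b)) (L : 'M[R]_(a, b)) : Prop :=
  forall i j, (fun k => Z k i j) @ \oo --> L i j.

Lemma cvg_mx_cst a b (L : 'M[R]_(a, b)) : cvg_mx (fun=> L) L.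
Proof. by move=> i j; exact: cvg_cst. Qed.

Lemma cvg_mxS a b (Z : nat -> 'M[R]_(a, b)) L : cvg_mx Z L -> cvg_mx (fun k => Z k.+1) L.
Proof. by move=> ZL i j; rewrite (cvg_shiftS (fun k => Z k i j)). Qed.

Lemma cvg_mxD a b (Z Y : nat -> 'M[R]_(a, b)) L M :
  cvg_mx Z L -> cvg_mx Y M -> cvg_mx (fun k => Z k + Y k) (L + M).
Proof. by move=> ZL YM i j; rewrite mxE; under eq_cvg do rewrite mxE; exact: cvgD. Qed.

Lemma cvg_mxZ a b (x : R) (Z : nat -> 'M[R]_(a, b)) L :
  cvg_mx Z L -> cvg_mx (fun k => x *: Z k) (x *: L).
Proof. by move=> ZL i j; rewrite mxE; under eq_cvg do rewrite mxE; exact: cvgMr. Qed.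

Lemma cvg_mxM a b c (Z : nat -> 'M[R]_(a, b)) (Y : nat -> 'M[R]_(b, c)) L M :
  cvg_mx Z L -> cvg_mx Y M -> cvg_mx (fun k => Z k *m Y k) (L *m M).
Proof.
move=> ZL YM i j; rewrite mxE; under eq_cvg do rewrite mxE.
by apply: cvg_big => [|l _]; [exact: add_continuous | exact: cvgM].
Qed.

Lemma cvg_mx_unique a b (Z : nat -> 'M[R]_(a, b)) L M :
  cvg_mx Z L -> cvg_mx Z M -> L = M.
Proof. by move=> ZL ZM; apply/matrixP => i j; exact: cvg_unique (ZL i j) (ZM i j). Qed.

Lemma cvg_mx_le a b (Z : nat -> 'M[R]_(a, b)) L Y :
  cvg_mx Z L -> (forall k, lemx (Z k) Y) -> lemx L Y.
Proof.
by move=> ZL ZY i j; apply: ler_cvg_to (ZL i j) (cvg_cst _) _; near=> k; exact: ZY.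
Unshelve. all: by end_near. Qed.

Lemma cvg_mx_ge a b (Z : nat -> 'M[R]_(a, b)) L Y :
  cvg_mx Z L -> (forall k, lemx Y (Z k)) -> lemx Y L.
Proof.
by move=> ZL YZ i j; apply: ler_cvg_to (cvg_cst _) (ZL i j) _; near=> k; exact: YZ.
Unshelve. all: by end_near. Qed.

Lemma nondecreasing_cvg_mx a b (Z : nat -> 'M[R]_(a, b)) Y :
  (forall k, lemx (Z k) (Z k.+1)) -> (forall k, lemx (Z k) Y) ->
  exists L, cvg_mx Z L.
Proof.
move=> Z_nd ZY; exists (\matrix_(i, j) sup (range (fun k => Z k i j))) => i j.
rewrite mxE; apply: nondecreasing_cvgn.
  by apply/nondecreasing_seqP => k; exact: Z_nd.
by exists (Y i j) => _ [k _ <-]; exact: ZY.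
Qed.

Lemma cvg_block_mx a b c d (A : nat -> 'M[R]_(a, c)) (B : nat -> 'M[R]_(a, d))
    (C : nat -> 'M[R]_(b, c)) (D : nat -> 'M[R]_(b, d)) LA LB LC LD :
  cvg_mx A LA -> cvg_mx B LB -> cvg_mx C LC -> cvg_mx D LD ->
  cvg_mx (fun k => block_mx (A k) (B k) (C k) (D k)) (block_mx LA LB LC LD).
Proof.
move=> AL BL CL DL i j.
case: (split_ordP i) => {}i ->; case: (split_ordP j) => {}j ->.
- by rewrite block_mxEul; under eq_cvg do rewrite block_mxEul; exact: AL.
- by rewrite block_mxEur; under eq_cvg do rewrite block_mxEur; exact: BL.
- by rewrite block_mxEdl; under eq_cvg do rewrite block_mxEdl; exact: CL.
- by rewrite block_mxEdr; under eq_cvg do rewrite block_mxEdr; exact: DL.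
Qed.

End EntrywiseConvergence.

Local Notation ones R n := (const_mx 1 : 'cV[R]_n).

Lemma mulmx_ones_block (R : realType) p m (A : 'M[R]_(p + m)) :
  A *m ones R (p + m) = col_mx (ulsubmx A *m ones R p + ursubmx A *m ones R m)
                               (dlsubmx A *m ones R p + drsubmx A *m ones R m).
Proof. by rewrite -{1}[A]submxK -col_mx_const mul_block_col. Qed.

Lemma block_1addZ (R : realType) p m (k : R) (A : 'M[R]_(p + m)) :
  1%:M + k *: A = block_mx (1%:M + k *: ulsubmx A) (k *: ursubmx A)
                           (k *: dlsubmx A) (1%:M + k *: drsubmx A).
Proof. by rewrite -{1}[A]submxK scale_block_mx scalar_mx_block add_block_mx !add0r. Qed.

Section GeneratorBlocks.
Variables (R : realType) (p m : nat) (T : 'M[R]_(p + m)).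
Hypothesis genT : is_generator T.

Lemma generator_mulmx_ones : T *m ones R (p + m) = 0.
Proof.
by apply/matrixP => i j; rewrite !mxE; under eq_bigr do rewrite mxE mulr1; case: genT.
Qed.

Lemma generator_rowsums :
  ulsubmx T *m ones R p + ursubmx T *m ones R m = 0 /\
  dlsubmx T *m ones R p + drsubmx T *m ones R m = 0.
Proof. by apply/eq_col_mx; rewrite col_mx0 -mulmx_ones_block generator_mulmx_ones. Qed.

Lemma ursubmx_generator_ge0 : nonnegmx (ursubmx T).
Proof. by move=> i j; rewrite !mxE; apply: genT.1; rewrite eq_lrshift. Qed.

Lemma dlsubmx_generator_ge0 : nonnegmx (dlsubmx T).
Proof. by move=> i j; rewrite !mxE; apply: genT.1; rewrite eq_rlshift. Qed.

Lemma ulsubmx_subgenerator : subgenerator (ulsubmx T).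
Proof.
split=> [i j ij|]; first by rewrite !mxE; apply: genT.1; rewrite eq_lshift.
have [+ _] := generator_rowsums; move/eqP; rewrite addr_eq0 => /eqP ->.
by apply/oppmx_le0/nonnegmxM; [exact: ursubmx_generator_ge0 | move=> i j; rewrite mxE].
Qed.

End GeneratorBlocks.

Definition riccati_lhs (R : realType) p m (T : 'M[R]_(p + m)) (X : 'M[R]_(p, m)) :=
  ursubmx T + X *m drsubmx T + ulsubmx T *m X + X *m dlsubmx T *m X.

Section MinimalSolution.
Variables (R : realType) (p m : nat) (T : 'M[R]_(p + m)).
Hypothesis genT : is_generator T.

(* Any rate c > 0 with c >= |T i i| for all i would do. *)
Let c : R := 1 + \sum_i `|T i i|.

Let c_gt0 : 0 < c.
Proof. by rewrite (lt_le_trans ltr01) // lerDl sumr_ge0. Qed.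

Let diag_ge i : - c <= T i i.
Proof.
suff : `|T i i| <= c by rewrite ler_norml => /andP[].
by rewrite ler_wpDl // (bigD1 i) //= lerDl sumr_ge0.
Qed.

Let P := 1%:M + c^-1 *: T.

Let P_blocks_ge0 := nonnegmx_submx (uniformized_ge0 c_gt0 genT.1 diag_ge).

Let P_rowsums :
  ulsubmx P *m ones R p + ursubmx P *m ones R m = ones R p /\
  dlsubmx P *m ones R p + drsubmx P *m ones R m = ones R m.
Proof.
apply/eq_col_mx; rewrite col_mx_const -mulmx_ones_block.
by rewrite mulmxDl mul1mx -scalemxAl generator_mulmx_ones // scaler0 addr0.
Qed.

(* The identity parts of the diagonal blocks of P contribute 2 Z, whence the
   factor 1/2 that makes the fixed points exactly the Riccati solutions. *)
Definition riccati_step (Z : 'M[R]_(p, m)) : 'M[R]_(p, m) :=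
  2^-1 *: (ulsubmx P *m Z + ursubmx P + (Z *m dlsubmx P *m Z + Z *m drsubmx P)).

Lemma riccati_stepE Z : riccati_step Z = Z + (c *+ 2)^-1 *: riccati_lhs T Z.
Proof.
rewrite /riccati_step /riccati_lhs /P block_1addZ.
rewrite block_mxKul block_mxKur block_mxKdl block_mxKdr.
rewrite mulmxDl mulmxDr mul1mx mulmx1 -!scalemxAl -!scalemxAr -scalemxAl.
move: (ursubmx T) (ulsubmx T *m Z) (Z *m drsubmx T) (Z *m dlsubmx T *m Z) => A B C D.
have c_neq0 : c != 0 by rewrite gt_eqF.
by apply/matrixP => i j; rewrite !mxE; field.
Qed.

Lemma riccati_step_fixedP Z : riccati_step Z = Z <-> riccati T Z.
Proof.
rewrite riccati_stepE; split=> [|ric0]; last first.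
  by rewrite (ric0 : riccati_lhs T Z = 0) scaler0 addr0.
move/eqP; rewrite -subr_eq0 addrAC subrr add0r.
by rewrite scaler_eq0 invr_eq0 mulrn_eq0 (gt_eqF c_gt0) => /eqP.
Qed.

Lemma riccati_step_le Z : lemx (riccati_lhs T Z) 0 -> lemx (riccati_step Z) Z.
Proof.
move=> res_le0 i j; have := res_le0 i j; rewrite [X in _ <= X]mxE => res_ij_le0.
rewrite riccati_stepE mxE [X in _ + X]mxE gerDl mulr_ge0_le0 //.
by rewrite invr_ge0 mulrn_wge0 // ltW.
Qed.

Lemma riccati_step_ge0 Z : nonnegmx Z -> nonnegmx (riccati_step Z).
Proof.
case: P_blocks_ge0 => Pul Pur Pdl Pdr Z_ge0.
apply: nonnegmxZ; first by rewrite invr_ge0 ler0n.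
by do !apply: nonnegmxD; do ?apply: nonnegmxM.
Qed.

Lemma riccati_step_monotone Z1 Z2 :
  nonnegmx Z1 -> lemx Z1 Z2 -> lemx (riccati_step Z1) (riccati_step Z2).
Proof.
case: P_blocks_ge0 => Pul Pur Pdl Pdr Z1_ge0 Z12.
apply: lemxZ; first by rewrite invr_ge0 ler0n.
have Z2_ge0 : nonnegmx Z2 by move=> i j; exact: le_trans (Z1_ge0 i j) (Z12 i j).
do !apply: lemxD; do ?[exact: lemx_refl | exact: lemx_mul2l | exact: lemx_mul2r].
apply: (@lemx_trans _ _ _ _ (Z1 *m dlsubmx P *m Z2)).
  exact: lemx_mul2l (nonnegmxM _ _) _.
by apply/lemx_mul2r/lemx_mul2r.
Qed.

Lemma riccati_step_substochastic Z : nonnegmx Z -> lemx (Z *m ones R m) (ones R p) ->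
  lemx (riccati_step Z *m ones R m) (ones R p).
Proof.
case: P_blocks_ge0 => Pul Pur Pdl Pdr Z_ge0 Z1_le1; have [rows_p rows_m] := P_rowsums.
rewrite /riccati_step -scalemxAl !mulmxDl -!mulmxA.
apply: (@lemx_trans _ _ _ _ (2^-1 *: (ones R p + Z *m ones R m))).
  apply: lemxZ; first by rewrite invr_ge0 ler0n.
  rewrite -[X in lemx _ (X + _)]rows_p -[X in lemx _ (_ + _ *m X)]rows_m mulmxDr.
  do !apply: lemxD; do ?[exact: lemx_refl | exact: lemx_mul2l].
  exact/lemx_mul2l/lemx_mul2l.
move=> i j; have := Z1_le1 i j; rewrite !mxE => Z1_ij_le1.
by rewrite -[leRHS](@mulVf _ 2) ?pnatr_eq0 // ler_wpM2l ?invr_ge0 ?ler0n // lerD.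
Qed.

Lemma riccati_step_cvg (Z : nat -> 'M[R]_(p, m)) L :
  cvg_mx Z L -> cvg_mx (riccati_step \o Z) (riccati_step L).
Proof.
move=> ZL; apply: cvg_mxZ.
by do ![exact: ZL | exact: cvg_mx_cst | apply: cvg_mxD | apply: cvg_mxM].
Qed.

Definition riccati_iter k := iter k riccati_step 0.

Lemma riccati_iter_ge0 k : nonnegmx (riccati_iter k).
Proof. by elim: k => [|k IHk]; [exact: nonnegmx0 | exact: riccati_step_ge0]. Qed.

Lemma riccati_iter_nondecreasing k : lemx (riccati_iter k) (riccati_iter k.+1).
Proof.
elim: k => [|k IHk]; first exact/lemx0/riccati_step_ge0/nonnegmx0.
exact: riccati_step_monotone (riccati_iter_ge0 k) IHk.
Qed.

Lemma riccati_iter_le Y :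
  nonnegmx Y -> lemx (riccati_step Y) Y -> forall k, lemx (riccati_iter k) Y.
Proof.
move=> Y_ge0 stepY_le; elim=> [|k IHk]; first exact/lemx0.
exact: lemx_trans (riccati_step_monotone (riccati_iter_ge0 k) IHk) stepY_le.
Qed.

Lemma riccati_iter_substochastic k : lemx (riccati_iter k *m ones R m) (ones R p).
Proof.
elim: k => [|k IHk]; last exact: riccati_step_substochastic (riccati_iter_ge0 k) IHk.
by rewrite mul0mx => i j; rewrite !mxE ler01.
Qed.

Variable Psi : 'M[R]_(p, m).
Hypothesis minPsi : minimal_nonneg_sol T Psi.

Lemma riccati_iter_cvg : cvg_mx riccati_iter Psi.
Proof.
have [Psi_ge0 ricPsi Psi_min] := minPsi.
have iter_le k : lemx (riccati_iter k) Psi.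
  by apply: riccati_iter_le => //; rewrite (riccati_step_fixedP Psi).2.
have [L iterL] := nondecreasing_cvg_mx riccati_iter_nondecreasing iter_le.
have L_ge0 : nonnegmx L.
  by apply/lemx0/(cvg_mx_ge iterL) => k; exact/lemx0/riccati_iter_ge0.
have stepL : riccati_step L = L.
  exact: cvg_mx_unique (riccati_step_cvg iterL) (cvg_mxS iterL).
suff -> : Psi = L by [].
by apply: lemx_anti; [apply/Psi_min/riccati_step_fixedP | exact: cvg_mx_le iterL iter_le].
Qed.

Lemma minimal_nonneg_sol_le Y :
  nonnegmx Y -> lemx (riccati_lhs T Y) 0 -> lemx Psi Y.
Proof.
move=> Y_ge0 /riccati_step_le stepY_le.
exact: cvg_mx_le riccati_iter_cvg (riccati_iter_le Y_ge0 stepY_le).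
Qed.

Lemma minimal_nonneg_sol_substochastic : lemx (Psi *m ones R m) (ones R p).
Proof.
apply: (cvg_mx_le (Z := fun k => riccati_iter k *m ones R m)) riccati_iter_substochastic.
apply: cvg_mxM; [exact: riccati_iter_cvg | exact: cvg_mx_cst].
Qed.

End MinimalSolution.

Lemma mulmx_exprS (R : pzRingType) n (A : 'M[R]_n) k : A ^+ k.+1 = A *m A ^+ k.
Proof. exact: exprS. Qed.

Lemma mulmx_exprSr (R : pzRingType) n (A : 'M[R]_n) k : A ^+ k.+1 = A ^+ k *m A.
Proof. exact: exprSr. Qed.

Section Excursions.
Variables (R : realType) (p m : nat) (X : 'M[R]_p) (Ap Bp : 'M[R]_(p, m)) (W : 'M[R]_m).

Definition excursion_step (Z : 'M[R]_(p, m)) := X *m Z *m W + Ap *m W + Bp.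

Definition excursion_sum n := \sum_(j < n) X ^+ j *m (Ap *m W + Bp) *m W ^+ j.

Lemma excursion_sumS n : excursion_sum n.+1 = excursion_step (excursion_sum n).
Proof.
rewrite /excursion_sum /excursion_step big_ord_recl expr0 mul1mx mulmx1 addrC -addrA.
congr (_ + _); rewrite mulmx_sumr mulmx_suml; apply: eq_bigr => j _.
by rewrite lift0 mulmx_exprS mulmx_exprSr !mulmxA.
Qed.

Lemma excursion_step_cvg (Z : nat -> 'M[R]_(p, m)) L :
  cvg_mx Z L -> cvg_mx (excursion_step \o Z) (excursion_step L).
Proof.
by move=> ZL; do ![exact: ZL | exact: cvg_mx_cst | apply: cvg_mxD | apply: cvg_mxM].
Qed.

Hypotheses (X_ge0 : nonnegmx X) (Ap_ge0 : nonnegmx Ap) (Bp_ge0 : nonnegmx Bp)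
  (W_ge0 : nonnegmx W).

Lemma excursion_step_monotone Z1 Z2 :
  lemx Z1 Z2 -> lemx (excursion_step Z1) (excursion_step Z2).
Proof.
move=> Z12; do 2!apply: lemxD (lemx_refl _).
exact/(lemx_mul2r W_ge0)/(lemx_mul2l X_ge0).
Qed.

Let excursion_term_ge0 j : nonnegmx (X ^+ j *m (Ap *m W + Bp) *m W ^+ j).
Proof.
apply: nonnegmxM; last exact: nonnegmxX.
by apply: nonnegmxM; [exact: nonnegmxX | exact/nonnegmxD/Bp_ge0/nonnegmxM].
Qed.

Lemma excursion_sum_ge0 n : nonnegmx (excursion_sum n).
Proof.
elim: n => [|n IHn]; first by rewrite /excursion_sum big_ord0; exact: nonnegmx0.
by rewrite /excursion_sum big_ord_recr; exact: nonnegmxD IHn (excursion_term_ge0 n).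
Qed.

Lemma excursion_sum_nondecreasing n : lemx (excursion_sum n) (excursion_sum n.+1).
Proof.
rewrite /excursion_sum big_ord_recr /= -[X in lemx X]addr0.
by apply: lemxD (lemx_refl _) _; exact/lemx0/excursion_term_ge0.
Qed.

Local Notation Cm1 := (block_mx 0 Bp 0 W : 'M[R]_(p + m)).
Local Notation C0 := (block_mx 0 Ap 0 0 : 'M[R]_(p + m)).
Local Notation C1 := (block_mx X 0 0 0 : 'M[R]_(p + m)).

(* The (+,-) block of taboo n l: such a path climbs h levels through X, enters
   S_- through Ap (staying at level h, so n + l = 2h + 1) or Bp (to level
   h - 1, so n + l = 2h), and then descends to level l through W. *)
Definition taboo_ur n l : 'M[R]_(p, m) :=
  if (l < n)%N then
    X ^+ (n + l)./2 *m (if odd (n + l) then Ap else Bp) *m W ^+ (n.-1 - (n + l)./2)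
  else 0.

Lemma taboo_urS n l :
  taboo_ur n.+1 l = (if l == n then X ^+ n else 0) *m Ap
                  + (if l.+1 == n then X ^+ n else 0) *m Bp + taboo_ur n l.+1 *m W.
Proof.
rewrite /taboo_ur addSnnS; have [lt_l1_n|lt_n_l1|<-] := ltngtP l.+1 n.
- have [-> ->] : (l < n.+1)%N = true /\ (l == n) = false by split; lia.
  rewrite !mul0mx !add0r -[RHS]mulmxA -mulmx_exprSr; congr (_ *m _ ^+ _); lia.
- rewrite !mul0mx !addr0; have [->|ne_l_n] := eqVneq l n; last first.
    by rewrite /= mul0mx ifF //; lia.
  have [-> -> ->] : [/\ odd (n + n.+1), (n + n.+1)./2 = n & (n < n.+1)%N] by split; lia.
  by rewrite subnn expr0 mulmx1.
- have [-> -> ->] :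
      [/\ odd (l.+1 + l.+1) = false, (l.+1 + l.+1)./2 = l.+1 & (l < l.+2)%N].
    by split; lia.
  by rewrite subnn expr0 mulmx1 mul0mx addr0 ifF ?mul0mx ?add0r //; lia.
Qed.

Lemma taboo_block n l :
  taboo Cm1 C0 C1 n l =
  block_mx (if l == n then X ^+ n else 0) (taboo_ur n l)
           0 (if (n == 0%N) && (l == 0%N) then 1%:M else 0).
Proof.
elim: n l => [|n IHn] l.
  rewrite /= /taboo_ur /=; case: eqP => _; last by rewrite block_mx0.
  by rewrite scalar_mx_block expr0 !idmxE.
rewrite taboo_urS; case: l => [|l] /=; rewrite !IHn !mulmx_block /= ?andbF.
all: rewrite !(mulmx0, mul0mx, addr0, add0r) !add_block_mx !(addr0, add0r) addrA //.
by rewrite eqSS; case: eqP; rewrite ?mul0mx // -mulmx_exprSr.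
Qed.

Definition first_passage_ur n : 'M[R]_(p, m) :=
  X ^+ n./2 *m (if odd n then Ap *m W else Bp) *m W ^+ n./2.

Lemma first_passage_block n :
  first_passage Cm1 C0 C1 n =
  block_mx 0 (first_passage_ur n) 0 (if n == 0%N then W else 0).
Proof.
rewrite /first_passage taboo_block mulmx_block andbT !(mulmx0, mul0mx, addr0, add0r).
congr block_mx; last by case: eqP; rewrite ?mul1mx ?mul0mx.
rewrite /first_passage_ur /taboo_ur addn0; case: n => [|n] /=.
  by rewrite !expr0 mul1mx mulmx1 mul0mx addr0.
rewrite mul0mx add0r; case: ifP => odd_n1.
  have -> : (n - uphalf n = uphalf n)%N by rewrite uphalfE; lia.
  by rewrite -!mulmxA -mulmx_exprSr mulmx_exprS.
have e : uphalf n = (n - uphalf n).+1 by rewrite uphalfE; lia.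
by rewrite [in W ^+ uphalf n]e -mulmxA -mulmx_exprSr.
Qed.

Lemma first_passage_ur_pair j :
  first_passage_ur j.*2 + first_passage_ur j.*2.+1 = X ^+ j *m (Ap *m W + Bp) *m W ^+ j.
Proof.
rewrite /first_passage_ur /= odd_double /= uphalf_double half_double.
by rewrite -mulmxDl -mulmxDr addrC.
Qed.

Lemma sum_first_passage N :
  \sum_(n < N.*2) first_passage Cm1 C0 C1 n =
  block_mx 0 (excursion_sum N) 0 (if N == 0%N then 0 else W).
Proof.
elim: N => [|N IHN]; first by rewrite big_ord0 /excursion_sum big_ord0 block_mx0.
rewrite doubleS !big_ord_recr /= IHN !first_passage_block !add_block_mx !addr0.
rewrite -addrA first_passage_ur_pair /excursion_sum big_ord_recr /=.
by case: N {IHN} => [|N]; rewrite /= ?addr0 ?add0r.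
Qed.

Lemma first_passage_ge0 n : nonnegmx (first_passage Cm1 C0 C1 n).
Proof.
rewrite first_passage_block; apply: nonnegmx_block; try exact: nonnegmx0.
  apply: nonnegmxM; last exact: nonnegmxX.
  by apply: nonnegmxM; [exact: nonnegmxX | case: ifP => _; first exact: nonnegmxM].
by case: eqP => _; [exact: W_ge0 | exact: nonnegmx0].
Qed.

End Excursions.

Lemma uniformized_sylvesterE (R : comUnitRingType) p m (a b : R) (A : 'M[R]_p)
    (B : 'M[R]_(p, m)) (C : 'M[R]_m) (Z : 'M[R]_(p, m)) :
  let M := 1%:M - b *: A in let N := 1%:M - a *: C in
  let V := (1%:M + b *: C) *m invmx N in
  M \in unitmx -> N \in unitmx ->
  M *m (invmx M *m (1%:M + a *: A) *m Z *m V + invmx M *m (a *: B) *m V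
        + invmx M *m (b *: B) - Z) *m N
  = (a + b) *: (B + A *m Z + Z *m C).
Proof.
move=> M N V M_unit N_unit; rewrite /V.
have eM : M = 1%:M - b *: A by []; have eN : N = 1%:M - a *: C by [].
clearbody M N.
rewrite !(mulmxBr, mulmxBl, mulmxDr, mulmxDl, mulmxA) (mulmxV M_unit) !mul1mx.
rewrite !(mulmxKV N_unit) eM eN.
rewrite !(mulmxBr, mulmxDr, mulmxBl, mulmxDl, mul1mx, mulmx1, mulNmx, mulmxN, mulmxA).
rewrite -!scalemxAl -!scalemxAr.
move: (A *m Z) (Z *m C) (A *m Z *m C) (B *m C) => AZ ZC AZC BC.
by apply/matrixP => i j; rewrite !mxE; ring.
Qed.

Section UpperRightBlock.
Variables (R : realType) (p m : nat) (T : 'M[R]_(p + m)) (Psi : 'M[R]_(p, m)).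
Variables lam mu : R.
Hypotheses (genT : is_generator T) (minPsi : minimal_nonneg_sol T Psi).
Hypotheses (lam_gt0 : 0 < lam) (mu_gt0 : 0 < mu).
Hypotheses (diag_lam : forall i, `|T i i| <= lam) (diag_mu : forall i, `|T i i| <= mu).

Local Notation Tpp := (ulsubmx T).
Local Notation Tpm := (ursubmx T).
Local Notation Tmp := (dlsubmx T).
Local Notation Tmm := (drsubmx T).
Local Notation U := (Tmm + Tmp *m Psi).
Local Notation K := (invmx (1%:M - mu^-1 *: Tpp)).
Local Notation X := (K *m ulsubmx (1%:M + lam^-1 *: T)).
Local Notation Ap := (K *m ursubmx (1%:M + lam^-1 *: T)).
Local Notation Bp := (K *m ursubmx (1%:M + mu^-1 *: T)).
Local Notation N := (1%:M - lam^-1 *: U).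
Local Notation W := ((1%:M + mu^-1 *: U) *m invmx N).

Let Psi_ge0 : nonnegmx Psi. Proof. by case: minPsi. Qed.

Let diag_ge (k : R) : (forall i, `|T i i| <= k) -> forall i, - k <= T i i.
Proof. by move=> diag_k i; move: (diag_k i); rewrite ler_norml => /andP[]. Qed.

Lemma riccati_lhsE Z :
  riccati_lhs T Z = Tpm + Tpp *m Z + Z *m U - Z *m Tmp *m (Psi - Z).
Proof.
rewrite /riccati_lhs mulmxDr mulmxBr !mulmxA.
move: (Z *m Tmm) (Tpp *m Z) (Z *m Tmp *m Psi) (Z *m Tmp *m Z) => A B C D.
by apply/matrixP => i j; rewrite !mxE; ring.
Qed.

Let Psi_sylvester : Tpm + Tpp *m Psi + Psi *m U = 0.
Proof.
case: minPsi => _ ricPsi _.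
by move: (ricPsi : riccati_lhs T Psi = 0); rewrite riccati_lhsE subrr mulmx0 subr0.
Qed.

Let U_subgenerator : subgenerator U.
Proof.
split=> [i j ij|].
  rewrite mxE addr_ge0 //; last exact: nonnegmxM (dlsubmx_generator_ge0 genT) Psi_ge0 i j.
  by rewrite !mxE; apply: genT.1; rewrite eq_rshift.
have [_ rows_m] := generator_rowsums genT.
rewrite mulmxDl -mulmxA -[X in lemx _ X]rows_m addrC.
apply: lemxD (lemx_refl _); apply: lemx_mul2l (dlsubmx_generator_ge0 genT) _.
by have := minimal_nonneg_sol_substochastic genT minPsi; apply.
Qed.

Let N_unit : N \in unitmx.
Proof.
by apply: subgenerator_1subZ_unit; [exact: U_subgenerator | rewrite invr_ge0 ltW].
Qed.

Let M_unit : 1%:M - mu^-1 *: Tpp \in unitmx.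
Proof.
by apply: subgenerator_1subZ_unit; [exact: ulsubmx_subgenerator | rewrite invr_ge0 ltW].
Qed.

Let K_ge0 : nonnegmx K.
Proof.
apply: subgenerator_1subZ_inv_ge0; first exact: ulsubmx_subgenerator.
by rewrite invr_ge0 ltW.
Qed.

Let Plam_blocks_ge0 := nonnegmx_submx (uniformized_ge0 lam_gt0 genT.1 (diag_ge diag_lam)).
Let Pmu_blocks_ge0 := nonnegmx_submx (uniformized_ge0 mu_gt0 genT.1 (diag_ge diag_mu)).

Let X_ge0 : nonnegmx X.
Proof. by case: Plam_blocks_ge0 => ul_ge0 _ _ _; exact: nonnegmxM K_ge0 ul_ge0. Qed.

Let Ap_ge0 : nonnegmx Ap.
Proof. by case: Plam_blocks_ge0 => _ ur_ge0 _ _; exact: nonnegmxM K_ge0 ur_ge0. Qed.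

Let Bp_ge0 : nonnegmx Bp.
Proof. by case: Pmu_blocks_ge0 => _ ur_ge0 _ _; exact: nonnegmxM K_ge0 ur_ge0. Qed.

Let W_ge0 : nonnegmx W.
Proof.
apply: nonnegmxM; last first.
  by apply: subgenerator_1subZ_inv_ge0; [exact: U_subgenerator | rewrite invr_ge0 ltW].
apply: uniformized_ge0 => //; first exact: U_subgenerator.1.
move=> i; rewrite mxE; apply: ler_wpDr.
  exact: (nonnegmxM (dlsubmx_generator_ge0 genT) Psi_ge0).
by rewrite !mxE diag_ge.
Qed.

Local Notation Gmap := (excursion_step X Ap Bp W).
Local Notation Gsum := (excursion_sum X Ap Bp W).

Lemma excursion_step_sylvester Z :
  (1%:M - mu^-1 *: Tpp) *m (Gmap Z - Z) *m N =
  (lam^-1 + mu^-1) *: (Tpm + Tpp *m Z + Z *m U).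
Proof.
rewrite /excursion_step !block_1addZ block_mxKul !block_mxKur.
exact: uniformized_sylvesterE.
Qed.

Lemma excursion_step_fixedP Z : Gmap Z = Z <-> Tpm + Tpp *m Z + Z *m U = 0.
Proof.
have ab_neq0 : lam^-1 + mu^-1 != 0 by rewrite gt_eqF // addr_gt0 ?invr_gt0.
split=> [GZ|sylv0].
  apply/eqP; rewrite -(inj_eq (scalerI ab_neq0)) scaler0 -excursion_step_sylvester.
  by rewrite GZ subrr mulmx0 mul0mx.
apply/eqP; rewrite -subr_eq0 -(inj_eq (can_inj (mulKmx M_unit))) mulmx0.
rewrite -(inj_eq (can_inj (mulmxK N_unit))) mul0mx.
by rewrite excursion_step_sylvester sylv0 scaler0.
Qed.

Lemma excursion_sum_le_Psi n : lemx (Gsum n) Psi.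
Proof.
elim: n => [|n IHn]; first by rewrite /excursion_sum big_ord0; exact/lemx0.
rewrite excursion_sumS.
apply: lemx_trans (excursion_step_monotone Ap Bp X_ge0 W_ge0 IHn) _.
by rewrite (excursion_step_fixedP Psi).2 ?Psi_sylvester.
Qed.

Lemma excursion_sum_cvg : cvg_mx Gsum Psi.
Proof.
have Gsum_nd := excursion_sum_nondecreasing X_ge0 Ap_ge0 Bp_ge0 W_ge0.
have [G GsumG] := nondecreasing_cvg_mx Gsum_nd excursion_sum_le_Psi.
have G_le_Psi : lemx G Psi := cvg_mx_le GsumG excursion_sum_le_Psi.
have G_ge0 : nonnegmx G.
  apply/lemx0/(cvg_mx_ge GsumG) => n.
  exact/lemx0/(excursion_sum_ge0 X_ge0 Ap_ge0 Bp_ge0 W_ge0).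
have GmapG : Gmap G = G.
  apply: cvg_mx_unique (excursion_step_cvg GsumG) _.
  rewrite (_ : _ \o _ = fun n => Gsum n.+1); first exact: cvg_mxS.
  by apply: funext => n; rewrite /= excursion_sumS.
suff G_eq_Psi : G = Psi by move: GsumG; rewrite G_eq_Psi.
apply: lemx_anti; first exact: G_le_Psi.
apply: (minimal_nonneg_sol_le genT minPsi G_ge0).
rewrite riccati_lhsE (excursion_step_fixedP G).1 // sub0r; apply/oppmx_le0.
apply: nonnegmxM; last by apply/submx_ge0.
exact: nonnegmxM G_ge0 (dlsubmx_generator_ge0 genT).
Qed.

Lemma qbd_first_passage_ge0 n :
  nonnegmx (first_passage (block_mx 0 Bp 0 W) (block_mx 0 Ap 0 0) (block_mx X 0 0 0) n).
Proof. exact: (first_passage_ge0 X_ge0 Ap_ge0 Bp_ge0 W_ge0 n). Qed.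

End UpperRightBlock.

Theorem lemma3 (R : realType) (p m : nat) (T : 'M[R]_(p + m))
  (Psi : 'M[R]_(p, m)) (lam mu : R) :
  (0 < p)%N -> (0 < m)%N ->
  is_generator T ->
  minimal_nonneg_sol T Psi ->
  0 < lam -> 0 < mu ->
  (forall i, `|T i i| <= lam) -> (forall i, `|T i i| <= mu) ->
  let U := drsubmx T + dlsubmx T *m Psi in
  let Plam := 1%:M + lam^-1 *: T in
  let Pmu := 1%:M + mu^-1 *: T in
  let W := (1%:M + mu^-1 *: U) *m invmx (1%:M - lam^-1 *: U) in
  let K := invmx (1%:M - mu^-1 *: ulsubmx T) in
  is_Gmatrix
    (block_mx 0 (K *m ursubmx Pmu) 0 W)
    (block_mx 0 (K *m ursubmx Plam) 0 0)
    (block_mx (K *m ulsubmx Plam) 0 0 0)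
    (block_mx 0 Psi 0 W).
Proof.
move=> _ _ genT minPsi lam_gt0 mu_gt0 diag_lam diag_mu U Plam Pmu W K i j.
have fp_ge0 := qbd_first_passage_ge0 genT minPsi lam_gt0 mu_gt0 diag_lam diag_mu.
have Gsum_cvg := excursion_sum_cvg genT minPsi lam_gt0 mu_gt0 diag_lam diag_mu.
apply: (nondecreasing_cvg_subseq (s := fun N => N.+1.*2)) => [|N|].
- by apply/nondecreasing_seqP => N; rewrite big_ord_recr lerDl fp_ge0.
- lia.
under eq_cvg do rewrite -summxE sum_first_passage /=.
apply: (cvg_block_mx (A := fun=> 0) (C := fun=> 0) (D := fun=> W)); try exact: cvg_mx_cst.
exact: cvg_mxS Gsum_cvg.
Qed.
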